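(* Let $n\geq 4$ and let $L$ be a solvable Lie algebra over $\mathbb{K}\in\{\mathbb{C},\mathbb{R}\}$ with nilradical isomorphic to $T(n)$, and let $f=\dim L-\frac12n(n-1)$ be the number of nonnilpotent (linearly nilindependent) basis elements $X^1,\ldots,X^f$ complementing the nilradical. The maximal possible value of $f$ is $n-1$.
   Context: $T(n)$ is the Lie algebra of strictly upper triangular $n\times n$ matrices over $\mathbb{K}$, of dimension $\frac12n(n-1)$. The nilradical of a solvable Lie algebra is its maximal nilpotent ideal. Elements are linearly nilindependent if no nontrivial linear combination of them is nilpotent (i.e. ad-nilpotent) in $L$. *)

(* Finite-dimensional Lie algebras over a field K, encoded
   concretely on the coordinate space 'rV[K]_m with a bracket. *)
From mathcomp Require Import all_boot all_algebra.
From mathcomp Require Import reals complex.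
Set Implicit Arguments. Unset Strict Implicit. Unset Printing Implicit Defensive.
Import GRing.Theory.
Local Open Scope ring_scope.

Section Lie.
Variable K : fieldType.

Definition is_lie_bracket (m : nat) (br : 'rV[K]_m -> 'rV[K]_m -> 'rV[K]_m) : Prop :=
  [/\ (forall (a : K) x y z, br (a *: x + y) z = a *: br x z + br y z),
      (forall (a : K) x y z, br z (a *: x + y) = a *: br z x + br z y),
      (forall x, br x x = 0) &
      (forall x y z, br x (br y z) + br y (br z x) + br z (br x y) = 0)].

(* Subspaces of K^m are row spaces of square matrices 'M_m (mxalgebra). *)
(* [A, B] : the subspace spanned by all brackets br u v, u in A, v in B
   (by bilinearity it suffices to take brackets of spanning rows). *)
Definition brk (m : nat) (br : 'rV[K]_m -> 'rV[K]_m -> 'rV[K]_m)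
    (A B : 'M[K]_m) : 'M[K]_m :=
  (\sum_(i < m) \sum_(j < m) <<br (row i A) (row j B)>>)%MS.

Definition is_ideal (m : nat) (br : 'rV[K]_m -> 'rV[K]_m -> 'rV[K]_m)
    (I : 'M[K]_m) : Prop :=
  forall x y : 'rV[K]_m, (y <= I)%MS -> (br x y <= I)%MS.

Definition derived (m : nat) br (A : 'M[K]_m) (k : nat) : 'M[K]_m :=
  iter k (fun X => brk br X X) A.

Definition lower_central (m : nat) br (A : 'M[K]_m) (k : nat) : 'M[K]_m :=
  iter k (fun X => brk br A X) A.

Definition lie_solvable (m : nat) br : Prop :=
  exists k, \rank (derived br (1%:M : 'M[K]_m) k) = 0%N.

Definition sub_nilpotent (m : nat) br (A : 'M[K]_m) : Prop :=
  exists k, \rank (lower_central br A k) = 0%N.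

Definition is_nilradical (m : nat) br (N : 'M[K]_m) : Prop :=
  [/\ is_ideal br N, sub_nilpotent br N &
      forall J : 'M[K]_m, is_ideal br J -> sub_nilpotent br J ->
        (N <= J)%MS -> (J <= N)%MS].

Definition strict_upper (n : nat) (A : 'M[K]_n) : Prop :=
  forall i j : 'I_n, (j <= i)%N -> A i j = 0.

Definition mx_comm (n : nat) (A B : 'M[K]_n) : 'M[K]_n := A *m B - B *m A.

Definition iso_to_T (n m : nat) br (N : 'M[K]_m) : Prop :=
  exists phi : 'M[K]_n -> 'rV[K]_m,
    [/\ (forall (a : K) A B, strict_upper A -> strict_upper B ->
           phi (a *: A + B) = a *: phi A + phi B),
        (forall A B, strict_upper A -> strict_upper B -> phi A = phi B -> A = B),
        (forall A, strict_upper A -> (phi A <= N)%MS),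
        (forall v, (v <= N)%MS -> exists2 A, strict_upper A & phi A = v) &
        (forall A B, strict_upper A -> strict_upper B ->
           phi (mx_comm A B) = br (phi A) (phi B))].

Definition max_f_statement (n : nat) : Prop :=
  (forall (m : nat) (br : 'rV[K]_m -> 'rV[K]_m -> 'rV[K]_m) (N : 'M[K]_m),
     is_lie_bracket br -> lie_solvable br -> is_nilradical br N ->
     iso_to_T n br N ->
     (m - (n * (n - 1)) %/ 2 <= n - 1)%N)
  /\
  (exists (m : nat) (br : 'rV[K]_m -> 'rV[K]_m -> 'rV[K]_m) (N : 'M[K]_m),
     [/\ is_lie_bracket br, lie_solvable br, is_nilradical br N,
         iso_to_T n br N & (m - (n * (n - 1)) %/ 2 = n - 1)%N]).

End Lie.

(* For x in L, ad x restricts to a derivation of the nilradical N = T(n).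
   When n >= 4 and 2 <> 0, a derivation of T(n) sends each simple root vector
   E_{i,i+1} to a multiple w_i of itself modulo the next term of the
   superdiagonal filtration.  The kernel E of x |-> (w_i(ad x))_i, of
   codimension at most n - 1, is an ideal acting on T(n) by
   filtration-raising derivations; hence for every ideal J of L inside E with
   [J, J] in N, the ideal J + N is nilpotent and maximality of N gives J in N.
   Descending along the derived series of the solvable ideal E yields E in N,
   so dim L - dim N <= n - 1.  The bound is attained by the upper triangular
   matrices with vanishing last diagonal entry: there the differences of
   consecutive diagonal entries are the weights w_i, so an element off T(n)
   has a nonzero weight and lies in no nilpotent ideal containing T(n). *)

From HB Require Import structures.
From mathcomp Require Import all_boot all_algebra.
From mathcomp Require Import reals complex.
From mathcomp Require Import zify ring.
From Stdlib Require Import ClassicalEpsilon.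
Set Implicit Arguments. Unset Strict Implicit. Unset Printing Implicit Defensive.
Import GRing.Theory Num.Theory.
Local Open Scope ring_scope.

Section LinearFun.
Variables (K : fieldType) (U V : lmodType K) (f : U -> V).
Hypothesis lin_f : linear f.

Let fL : {linear U -> V} := HB.pack f (GRing.isLinear.Build _ _ _ _ f lin_f).

Lemma linfun0 : f 0 = 0. Proof. exact: (linear0 fL). Qed.
Lemma linfunD x y : f (x + y) = f x + f y. Proof. exact: (linearD fL). Qed.
Lemma linfunZ a x : f (a *: x) = a *: f x. Proof. exact: (linearZ_LR fL). Qed.
Lemma linfunN x : f (- x) = - f x. Proof. exact: (linearN fL). Qed.

End LinearFun.

Section RowLinearFun.
Variables (K : fieldType) (m q : nat) (f : 'rV[K]_m -> 'rV[K]_q).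
Hypothesis lin_f : linear f.

Lemma mul_rV_linfun u : u *m lin1_mx f = f u.
Proof.
exact: (mul_rV_lin1 (HB.pack f (GRing.isLinear.Build _ _ _ _ f lin_f))).
Qed.

Definition preimmx r (C : 'M[K]_(r, q)) : 'M[K]_m := kermx (lin1_mx f *m cokermx C).

Lemma preimmxE r (C : 'M_(r, q)) u : (u <= preimmx C)%MS = (f u <= C)%MS.
Proof. by rewrite sub_kermx mulmxA mul_rV_linfun submxE. Qed.

Lemma sub_preimmx r (C : 'M_(r, q)) s (A : 'M_(s, m)) :
  (A <= preimmx C)%MS <-> forall u, (u <= A)%MS -> (f u <= C)%MS.
Proof.
split=> [AC u uA | AC]; first by rewrite -preimmxE (submx_trans uA).
by apply/row_subP => i; rewrite preimmxE AC ?row_sub.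
Qed.

Lemma linfun_rows_sub r (C : 'M_(r, q)) s (A : 'M_(s, m)) :
  (forall i, (f (row i A) <= C)%MS) -> forall u, (u <= A)%MS -> (f u <= C)%MS.
Proof. by move=> AC; apply/sub_preimmx/row_subP => i; rewrite preimmxE. Qed.

End RowLinearFun.

Section LieBracket.
Variables (K : fieldType) (m : nat) (br : 'rV[K]_m -> 'rV[K]_m -> 'rV[K]_m).
Hypothesis br_lie : is_lie_bracket br.

Lemma br_linl v : linear (br^~ v).
Proof. by case: br_lie => brl _ _ _ a x y; rewrite brl. Qed.

Lemma br_linr u : linear (br u).
Proof. by case: br_lie => _ brr _ _ a x y; rewrite brr. Qed.

Lemma br_anticomm x y : br x y = - br y x.
Proof.
case: br_lie => _ _ br_alt _; apply/eqP; rewrite -subr_eq0 opprK.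
have := br_alt (x + y).
rewrite (linfunD (br_linl _)) !(linfunD (br_linr _)) !br_alt.
by rewrite add0r addr0 => ->.
Qed.

Lemma br_leibniz x u v : br x (br u v) = br u (br x v) + br (br x u) v.
Proof.
case: br_lie => _ _ _ /(_ x u v) jac.
rewrite (br_anticomm v x) (linfunN (br_linr _)) (br_anticomm v (br x u)) in jac.
by apply/eqP; rewrite -subr_eq0 opprD addrA jac.
Qed.

Lemma brk_in (A B : 'M[K]_m) u v : (u <= A)%MS -> (v <= B)%MS ->
  (br u v <= brk br A B)%MS.
Proof.
move=> uA vB; apply: (linfun_rows_sub (br_linl v)) uA => i.
apply: (linfun_rows_sub (br_linr _)) vB => j.
by apply: (sumsmx_sup i) => //; apply: (sumsmx_sup j) => //; rewrite genmxE.
Qed.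

Lemma brk_sub (A B C : 'M[K]_m) :
  (forall u v, (u <= A)%MS -> (v <= B)%MS -> (br u v <= C)%MS) ->
  (brk br A B <= C)%MS.
Proof.
move=> ABC; apply/sumsmx_subP => i _; apply/sumsmx_subP => j _.
by rewrite genmxE ABC ?row_sub.
Qed.

Lemma brkS (A B A' B' : 'M[K]_m) : (A <= A')%MS -> (B <= B')%MS ->
  (brk br A B <= brk br A' B')%MS.
Proof.
move=> AA' BB'; apply: brk_sub => u v uA vB.
by apply: brk_in; [apply: submx_trans AA' | apply: submx_trans BB'].
Qed.

Lemma ideal_brk (I : 'M[K]_m) : is_ideal br I -> is_ideal br (brk br I I).
Proof.
move=> I_id x; apply/(sub_preimmx (br_linr x)); apply: brk_sub => u v uI vI.
by rewrite (preimmxE (br_linr x)) br_leibniz addmx_sub // brk_in // I_id.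
Qed.

Lemma ideal_brk_sub (I : 'M[K]_m) : is_ideal br I -> (brk br I I <= I)%MS.
Proof. by move=> I_id; apply: brk_sub => u v _; apply: I_id. Qed.

Lemma ideal_adds (I J : 'M[K]_m) :
  is_ideal br I -> is_ideal br J -> is_ideal br (I + J)%MS.
Proof.
move=> I_id J_id x; apply/(sub_preimmx (br_linr x)).
rewrite addsmx_sub; apply/andP; split; apply/(sub_preimmx (br_linr x)) => u uIJ.
  by rewrite (submx_trans (I_id x u uIJ)) ?addsmxSl.
by rewrite (submx_trans (J_id x u uIJ)) ?addsmxSr.
Qed.

Lemma derivedS (A B : 'M[K]_m) j : (A <= B)%MS -> (derived br A j <= derived br B j)%MS.
Proof. by move=> AB; elim: j => //= j IHj; apply: brkS. Qed.

Lemma ideal_derived (I : 'M[K]_m) j : is_ideal br I -> is_ideal br (derived br I j).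
Proof. by move=> I_id; elim: j => //= j; apply: ideal_brk. Qed.

Lemma derived_sub (I : 'M[K]_m) j : is_ideal br I -> (derived br I j <= I)%MS.
Proof.
move=> I_id; elim: j => //= j IHj.
by apply: submx_trans IHj; apply: ideal_brk_sub; apply: ideal_derived.
Qed.

End LieBracket.

Lemma sum_ord_geq (N a : nat) : (\sum_(j < N) (a <= j) = N - a)%N.
Proof.
elim: N => [|N IHN]; first by rewrite big_ord0.
by rewrite big_ord_recr /= IHN; case: leqP; lia.
Qed.

Lemma sum_superdiag_pairs (N k : nat) :
  (\sum_(i < N) \sum_(j < N) (k + i <= j) = 'C(N.+1 - k, 2))%N.
Proof.
under eq_bigr => i _ do rewrite sum_ord_geq.
elim: N => [|N IHN]; first by rewrite big_ord0 bin_small //; lia.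
rewrite big_ord_recl /= (eq_bigr (fun i : 'I_N => N - (k + i)))%N; last first.
  by move=> i _; rewrite /bump /=; lia.
rewrite IHN; have [le_k | lt_k] := leqP k N.+1.
  by rewrite (_ : N.+2 - k = (N.+1 - k).+1)%N ?binS ?bin1 ?addn0; lia.
by rewrite !bin_small; lia.
Qed.

Section Superdiagonal.
Variables (K : fieldType) (p : nat).
Local Notation n := p.+1.
Local Notation M := 'M[K]_n.

(* Written with k + i so that superdiag 1 is convertible to strict_upper;
   superdiag 0 is the upper triangular matrices. *)
Definition superdiag k (A : M) := forall i j : 'I_n, (j < k + i)%N -> A i j = 0.

Lemma superdiagW k l A : (k <= l)%N -> superdiag l A -> superdiag k A.
Proof. by move=> le_kl Al i j lt_ji; apply: Al; lia. Qed.

Lemma superdiag0 k : superdiag k 0.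
Proof. by move=> i j _; rewrite mxE. Qed.

Lemma superdiagP k c A B :
  superdiag k A -> superdiag k B -> superdiag k (c *: A + B).
Proof. by move=> Ak Bk i j lt_ji; rewrite !mxE Ak // Bk // mulr0 addr0. Qed.

Lemma superdiagD k A B : superdiag k A -> superdiag k B -> superdiag k (A + B).
Proof. by move=> Ak Bk; rewrite -[A]scale1r; apply: superdiagP. Qed.

Lemma superdiagZ k c A : superdiag k A -> superdiag k (c *: A).
Proof. by move=> Ak; rewrite -[_ *: A]addr0; apply/superdiagP/superdiag0. Qed.

Lemma superdiagB k A B : superdiag k A -> superdiag k B -> superdiag k (A - B).
Proof. by move=> Ak Bk; rewrite -scaleN1r addrC; apply: superdiagP. Qed.

Lemma superdiag_sum k (I : Type) (r : seq I) (P : pred I) (F : I -> M) :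
  (forall i, P i -> superdiag k (F i)) -> superdiag k (\sum_(i <- r | P i) F i).
Proof.
by move=> Fk; elim/big_rec: _ => [|i S Pi]; [exact: superdiag0 | apply/superdiagD/Fk].
Qed.

Lemma superdiagM k l A B : superdiag k A -> superdiag l B -> superdiag (k + l) (A *m B).
Proof.
move=> Ak Bl i j lt_ji; rewrite mxE big1 // => r _.
have [lt_ri | le_ri] := ltnP r (k + i); first by rewrite Ak ?mul0r.
by rewrite Bl ?mulr0 //; lia.
Qed.

Lemma superdiag_comm k l A B :
  superdiag k A -> superdiag l B -> superdiag (k + l) (mx_comm A B).
Proof.
by move=> Ak Bl; apply: superdiagB; [|rewrite addnC]; apply: superdiagM.
Qed.

(* inord sends indices beyond p to 0, whence the range hypotheses below. *)
Definition emx (a b : nat) : M := delta_mx (inord a) (inord b).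

Lemma emx_val (i j : 'I_n) : delta_mx i j = emx i j.
Proof. by rewrite /emx !inord_val. Qed.

Lemma inord_eq (a b : nat) : (a <= p)%N -> (b <= p)%N ->
  ((inord a : 'I_n) == inord b) = (a == b).
Proof. by move=> ap bp; rewrite -(inj_eq val_inj) /= !inordK. Qed.

Lemma superdiag_emx k a b : (a + k <= b <= p)%N -> superdiag k (emx a b).
Proof.
move=> /andP[le_akb le_bp] i j lt_ji; rewrite mxE.
case: eqP => // eq_i; case: eqP => //= eq_j.
by move: lt_ji; rewrite eq_i eq_j !inordK; lia.
Qed.

Lemma superdiag_delta k (i j : 'I_n) : (k + i <= j)%N -> superdiag k (delta_mx i j).
Proof. by move=> kij; rewrite emx_val; apply: superdiag_emx; have := ltn_ord j; lia. Qed.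

Lemma superdiag_sum_delta k A : superdiag k A ->
  A = \sum_(i : 'I_n) \sum_(j : 'I_n | (k + i <= j)%N) A i j *: delta_mx i j.
Proof.
move=> Ak; rewrite [LHS]matrix_sum_delta; apply: eq_bigr => i _.
rewrite (bigID (fun j : 'I_n => k + i <= j)%N) /= addrC big1 ?add0r // => j.
by rewrite -ltnNge => lt_ji; rewrite Ak // scale0r.
Qed.

Lemma mulmx_delta_entry (X : M) (a b r c : 'I_n) :
  (X *m delta_mx a b) r c = (if c == b then X r a else 0).
Proof.
rewrite mxE (bigD1 a) //= big1 ?addr0 => [|l /negbTE nla]; last by rewrite mxE nla mulr0.
by rewrite mxE eqxx /=; case: (c == b); rewrite ?mulr1 ?mulr0.
Qed.

Lemma delta_mulmx_entry (X : M) (a b r c : 'I_n) :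
  (delta_mx a b *m X) r c = (if r == a then X b c else 0).
Proof.
rewrite mxE (bigD1 b) //= big1 ?addr0 => [|l /negbTE nlb]; last by rewrite mxE nlb andbF mul0r.
by rewrite mxE eqxx andbT; case: (r == a); rewrite ?mul1r ?mul0r.
Qed.

Lemma mx_entryD (A B : M) i j : (A + B) i j = A i j + B i j.
Proof. by rewrite !mxE. Qed.

Lemma mx_entryB (A B : M) i j : (A - B) i j = A i j - B i j.
Proof. by rewrite !mxE. Qed.

Section CommEntries.
Variables (a b r c : nat).
Hypotheses (ap : (a <= p)%N) (bp : (b <= p)%N) (rp : (r <= p)%N) (cp : (c <= p)%N).

Lemma mx_comm_emx_entry X : mx_comm X (emx a b) (inord r) (inord c) =
  (if c == b then X (inord r) (inord a) else 0)
  - (if r == a then X (inord b) (inord c) else 0).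
Proof. by rewrite mx_entryB /emx mulmx_delta_entry delta_mulmx_entry !inord_eq. Qed.

Lemma mx_comm_emx_entry_l X : mx_comm (emx a b) X (inord r) (inord c) =
  (if r == a then X (inord b) (inord c) else 0)
  - (if c == b then X (inord r) (inord a) else 0).
Proof. by rewrite mx_entryB /emx mulmx_delta_entry delta_mulmx_entry !inord_eq. Qed.

End CommEntries.

Lemma mx_comm_emx0 a b c d : (a <= p)%N -> (b <= p)%N -> (c <= p)%N -> (d <= p)%N ->
  b != c -> d != a -> mx_comm (emx a b) (emx c d) = 0.
Proof.
by move=> ap bp cp dp bc da; rewrite /mx_comm !mul_delta_mx_0 ?subr0 // inord_eq.
Qed.

Lemma mx_comm_emx a b c : (a <= p)%N -> (b <= p)%N -> (c <= p)%N -> c != a ->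
  mx_comm (emx a b) (emx b c) = emx a c.
Proof.
by move=> ap bp cp ca; rewrite /mx_comm mul_delta_mx mul_delta_mx_0 ?subr0 // inord_eq.
Qed.

Lemma mx_comm_linl c (A B C : M) :
  mx_comm (c *: A + B) C = c *: mx_comm A C + mx_comm B C.
Proof.
rewrite /mx_comm mulmxDl mulmxDr -scalemxAl -scalemxAr scalerBr.
by rewrite opprD addrACA.
Qed.

Lemma mx_comm_linr c (A B C : M) :
  mx_comm C (c *: A + B) = c *: mx_comm C A + mx_comm C B.
Proof.
rewrite /mx_comm mulmxDl mulmxDr -scalemxAl -scalemxAr scalerBr.
by rewrite opprD addrACA.
Qed.

Lemma mx_comm_jacobi (X Y Z : M) :
  mx_comm X (mx_comm Y Z) + mx_comm Y (mx_comm Z X) + mx_comm Z (mx_comm X Y) = 0.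
Proof.
rewrite /mx_comm !mulmxBr !mulmxBl !mulmxA.
move: (X *m Y *m Z) (X *m Z *m Y) (Y *m Z *m X) (Z *m Y *m X) (Y *m X *m Z) (Z *m X *m Y).
move=> a b c d e f; rewrite !opprB !addrA !subrK (addrAC _ (- e)) (addrAC (a - b) d b).
by rewrite subrK (addrAC (a + d) (- e) (- d)) addrK subrK subrr.
Qed.

Lemma mulmx_entry_single (A B : M) i j l :
  (forall l', l' != l -> A i l' * B l' j = 0) -> (A *m B) i j = A i l * B l j.
Proof. by move=> Al; rewrite mxE (bigD1 l) //= big1 ?addr0 // => l' /Al. Qed.

Lemma mx_comm_diag_entry (A B : M) i : superdiag 0 A -> superdiag 0 B -> mx_comm A B i i = 0.
Proof.
move=> A0 B0.
have diag_mul (X Y : M) : superdiag 0 X -> superdiag 0 Y -> (X *m Y) i i = X i i * Y i i.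
  move=> X0 Y0; apply: mulmx_entry_single => l li.
  have [lt_li | le_il] := ltnP l i; first by rewrite X0 ?mul0r.
  by rewrite Y0 ?mulr0 //; move: li; rewrite -(inj_eq val_inj) /=; lia.
by rewrite mx_entryB !diag_mul // mulrC subrr.
Qed.

Lemma mx_comm_superdiag1_entry (V W : M) i : (i < p)%N ->
  superdiag 0 V -> superdiag 1 W ->
  mx_comm V W (inord i) (inord i.+1)
  = (V (inord i) (inord i) - V (inord i.+1) (inord i.+1)) * W (inord i) (inord i.+1).
Proof.
move=> ip V0 W1.
have ordE (l : 'I_n) j : (j <= p)%N -> (l != inord j) = (nat_of_ord l != j).
  by move=> jp; rewrite -(inj_eq val_inj) /= inordK.
rewrite mx_entryB (mulmx_entry_single (l := inord i)); last first.
  move=> l; rewrite ordE; last lia.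
  move=> li; have [lt_li | le_il] := ltnP l i; first by rewrite V0 ?mul0r // inordK //; lia.
  by rewrite W1 ?mulr0 // !inordK //; lia.
rewrite (mulmx_entry_single (l := inord i.+1)); first by rewrite mulrBl (mulrC (W _ _)).
move=> l; rewrite ordE // => li; have [lt_li | le_il] := ltnP l i.+1.
  by rewrite W1 ?mul0r // inordK //; lia.
by rewrite V0 ?mulr0 // !inordK //; lia.
Qed.

End Superdiagonal.

Section Derivations.
Variables (K : fieldType) (p : nat).
Local Notation n := p.+1.
Local Notation M := 'M[K]_n.
Local Notation superdiag := (@superdiag K p).
Local Notation emx := (@emx K p).

(* Derivations of T(n) and the isomorphism T(n) ~ N are only defined on T(n). *)
Definition tlinear (V : lmodType K) (f : M -> V) :=
  forall c A B, superdiag 1 A -> superdiag 1 B -> f (c *: A + B) = c *: f A + f B.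

Section TLinear.
Variables (V : lmodType K) (f : M -> V).
Hypothesis f_lin : tlinear f.

Lemma tlinear0 : f 0 = 0.
Proof.
have := f_lin (-1) (@superdiag0 K p 1) (@superdiag0 K p 1).
by rewrite scaler0 addr0 scaleN1r addNr.
Qed.

Lemma tlinearD A B : superdiag 1 A -> superdiag 1 B -> f (A + B) = f A + f B.
Proof. by move=> A1 B1; have := f_lin 1 A1 B1; rewrite !scale1r. Qed.

Lemma tlinearZ c A : superdiag 1 A -> f (c *: A) = c *: f A.
Proof.
by move=> A1; have := f_lin c A1 (@superdiag0 K p 1); rewrite !addr0 tlinear0 addr0.
Qed.

Lemma tlinearB A B : superdiag 1 A -> superdiag 1 B -> f (A - B) = f A - f B.
Proof. by move=> A1 B1; have := f_lin (-1) B1 A1; rewrite !scaleN1r !(addrC (- _)). Qed.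

Lemma tlinear_sum (I : Type) (r : seq I) (P : pred I) (F : I -> M) :
  (forall i, P i -> superdiag 1 (F i)) ->
  f (\sum_(i <- r | P i) F i) = \sum_(i <- r | P i) f (F i).
Proof.
move=> F1; suff [] : superdiag 1 (\sum_(i <- r | P i) F i) /\
  f (\sum_(i <- r | P i) F i) = \sum_(i <- r | P i) f (F i) by [].
elim/big_rec2: _ => [|i fS S Pi [S1 <-]].
  by split; [exact: superdiag0 | exact: tlinear0].
have Fi1 := F1 i Pi; split; [exact: superdiagD | exact: tlinearD].
Qed.

End TLinear.

Definition is_derivation (D : M -> M) :=
  [/\ tlinear D, (forall A, superdiag 1 A -> superdiag 1 (D A)) &
      forall A B, superdiag 1 A -> superdiag 1 B ->
        D (mx_comm A B) = mx_comm (D A) B + mx_comm A (D B)].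

Lemma eq0_of_scaled (c x y : K) : c != 0 -> y = 0 -> y = c * x -> x = 0.
Proof. by move=> c_neq0 -> /esym/eqP; rewrite mulf_eq0 (negbTE c_neq0) => /eqP. Qed.

Section Derivation.
Variable D : M -> M.
Hypothesis D_der : is_derivation D.

Let D_lin : tlinear D. Proof. by case: D_der. Qed.

Lemma der_comm_emx0 a b c d : (a < b <= p)%N -> (c < d <= p)%N -> b != c -> d != a ->
  mx_comm (D (emx a b)) (emx c d) + mx_comm (emx a b) (D (emx c d)) = 0.
Proof.
move=> /andP[lt_ab le_bp] /andP[lt_cd le_dp] bc da; case: D_der => _ _ <-.
- by rewrite mx_comm_emx0 ?tlinear0 //; lia.
- by apply: superdiag_emx; lia.
- by apply: superdiag_emx; lia.
Qed.

Lemma der_emx a b c : (a < b < c)%N -> (c <= p)%N ->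
  D (emx a c) = mx_comm (D (emx a b)) (emx b c) + mx_comm (emx a b) (D (emx b c)).
Proof.
move=> /andP[lt_ab lt_bc] le_cp; case: D_der => _ _ <-.
- by rewrite mx_comm_emx //; lia.
- by apply: superdiag_emx; lia.
- by apply: superdiag_emx; lia.
Qed.

Section Shift.
Variable s : nat.
Hypotheses (s_gt0 : (0 < s)%N)
  (D_simple : forall a, (a < p)%N -> superdiag s (D (emx a a.+1))).

(* The E_{a,a+1} generate T(n), so their images control D everywhere. *)
Lemma der_superdiag_emx a b : (a < b <= p)%N -> superdiag (b - a + s - 1) (D (emx a b)).
Proof.
suff D_emx d c : (c + d.+1 <= p)%N -> superdiag (d + s) (D (emx c (c + d.+1))).
  move=> /andP[lt_ab le_bp]; have := D_emx (b - a.+1)%N a ltac:(lia).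
  by rewrite (_ : (a + (b - a.+1).+1 = b)%N); [apply: superdiagW | ]; lia.
elim: d c => [|d IHd] c cdp; first by rewrite addn1; apply: D_simple; lia.
rewrite (@der_emx c c.+1 (c + d.+2)); try lia.
apply: superdiagD.
  rewrite (_ : (d.+1 + s = s + d.+1)%N); last lia.
  by apply: superdiag_comm; [apply: D_simple | apply: superdiag_emx]; lia.
rewrite (_ : (d.+1 + s = 1 + (d + s))%N); last lia.
apply: superdiag_comm; first by apply: superdiag_emx; lia.
by rewrite (_ : (c + d.+2 = c.+1 + d.+1)%N); [apply: IHd | ]; lia.
Qed.

Lemma der_superdiag k A : (0 < k)%N -> superdiag k A -> superdiag (k + s - 1) (D A).
Proof.
move=> k_gt0 Ak; rewrite (superdiag_sum_delta Ak).
have delta1 (i j : 'I_n) : (k + i <= j)%N -> superdiag 1 (delta_mx i j).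
  by move=> kij; exact: superdiagW k_gt0 (superdiag_delta K kij).
rewrite tlinear_sum // => [|i _]; last by apply: superdiag_sum => j /delta1/superdiagZ.
apply: superdiag_sum => i _; rewrite tlinear_sum // => [|j /delta1/superdiagZ] //.
apply: superdiag_sum => j kij; rewrite (tlinearZ D_lin _ (delta1 _ _ kij)).
apply/superdiagZ; rewrite emx_val.
by apply: (superdiagW _ (der_superdiag_emx _)); have := ltn_ord j; lia.
Qed.

End Shift.

Lemma der_comm_emx0_entry a b c d r s :
    (a < b <= p)%N -> (c < d <= p)%N -> b != c -> d != a ->
  mx_comm (D (emx a b)) (emx c d) (inord r) (inord s)
  + mx_comm (emx a b) (D (emx c d)) (inord r) (inord s) = 0.
Proof. by move=> ab cd bc da; rewrite -mx_entryD der_comm_emx0 // mxE. Qed.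

(* Each entry of D(E_{i,i+1}) on the first superdiagonal is isolated by
   applying D to a vanishing commutator [E_{i,i+1}, E_{cd}] and reading off
   one entry; near the corners of the diagonal this needs n >= 4, and two
   cases also use [E_{ab}, E_{bc}] = E_{ac}, which brings in a factor 2. *)
Local Ltac eval_nat_eqs := repeat match goal with
 | |- context [ ?a == ?b ] => match type of a with nat => idtac end;
     first [ rewrite (_ : (a == b) = true); last by apply/eqP; lia
           | rewrite (_ : (a == b) = false); last by apply/eqP; lia ]
 end.

Local Ltac eval_comm_entries :=
  rewrite ?mx_comm_emx_entry ?mx_comm_emx_entry_l; try lia; eval_nat_eqs.

Local Ltac comm_entries rel := move: rel; do 4 move/(_ ltac:(lia)); eval_comm_entries.

Local Ltac solve_linear_eq0 :=
  by rewrite ?subr0 ?sub0r ?addr0 ?add0r => /eqP; rewrite ?oppr_eq0 => /eqP.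

Local Notation simple_entry i k := (D (emx i i.+1) (inord k) (inord k.+1)).

Lemma simple_entry0_below i k : (i < p)%N -> (k.+2 <= p)%N ->
  i != k -> i != k.+1 -> i != k.+2 -> simple_entry i k = 0.
Proof.
move=> ip kp ik ik1 ik2; comm_entries (@der_comm_emx0_entry i i.+1 k.+1 k.+2 k k.+2).
solve_linear_eq0.
Qed.

Lemma simple_entry0_above i k : (i < p)%N -> (k.+1 < p)%N ->
  i.+1 != k -> i != k -> i != k.+1 -> simple_entry i k.+1 = 0.
Proof.
move=> ip kp i1k ik ik1; comm_entries (@der_comm_emx0_entry i i.+1 k k.+1 k k.+2).
solve_linear_eq0.
Qed.

Hypothesis p_ge3 : (3 <= p)%N.

Lemma simple_entry0_bottom1 : simple_entry 1 0 = 0.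
Proof. comm_entries (@der_comm_emx0_entry 1 2 1 3 0 3); solve_linear_eq0. Qed.

Lemma simple_entry0_top1 s : p = s.+3 -> simple_entry s.+1 s.+2 = 0.
Proof.
move=> ps; comm_entries (@der_comm_emx0_entry s.+1 s.+2 s s.+2 s s.+3).
solve_linear_eq0.
Qed.

Hypothesis two_neq0 : (2 : K) != 0.

Lemma simple_entry0_bottom2 : simple_entry 2 0 = 0.
Proof.
comm_entries (@der_comm_emx0_entry 2 3 1 3 0 3).
rewrite (@der_emx 1 2 3) // mx_entryD; eval_comm_entries.
by move/(@eq0_of_scaled 2 (simple_entry 2 0) _ two_neq0); apply; ring.
Qed.

Lemma simple_entry0_top2 s : p = s.+3 -> simple_entry s s.+2 = 0.
Proof.
move=> ps; comm_entries (@der_comm_emx0_entry s s.+1 s s.+2 s s.+3).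
rewrite (@der_emx s s.+1 s.+2) //; try lia; rewrite mx_entryD; eval_comm_entries.
have neg2_neq0 : (- 2 : K) != 0 by rewrite oppr_eq0.
by move/(@eq0_of_scaled (- 2) (simple_entry s s.+2) _ neg2_neq0); apply; ring.
Qed.

Lemma simple_entry0 i k : (i < p)%N -> (k < p)%N -> k != i -> simple_entry i k = 0.
Proof.
move=> ip kp ki.
have [below | not_below] := boolP [&& k.+2 <= p, i != k.+1 & i != k.+2]%N.
  by apply: simple_entry0_below; lia.
case: k kp ki not_below => [|k] kp ki not_below.
  have [->|->] : i = 1%N \/ i = 2%N by lia.
    exact: simple_entry0_bottom1.
  exact: simple_entry0_bottom2.
have [above | not_above] := boolP [&& i.+1 != k & i != k]%N.
  by apply: simple_entry0_above; lia.
have [s ps] : exists s, p = s.+3 by exists (p - 3)%N; lia.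
have -> : k = s.+1 by lia.
have [->|->] : i = s.+1 \/ i = s by lia.
  exact: simple_entry0_top1.
exact: simple_entry0_top2.
Qed.

Lemma der_superdiag2_simple :
  (forall a, (a < p)%N -> simple_entry a a = 0) ->
  forall a, (a < p)%N -> superdiag 2 (D (emx a a.+1)).
Proof.
move=> D_aa a ap i j lt_ji.
have Da1 : superdiag 1 (D (emx a a.+1)).
  by case: D_der => _ D1 _; apply/D1/superdiag_emx; lia.
have [lt_ji1 | le_ij1] := ltnP j (1 + i); first exact: Da1.
have ip : (i < p)%N by have := ltn_ord j; lia.
have -> : j = inord i.+1 :> 'I_n by apply: val_inj; rewrite /= inordK; lia.
rewrite -[X in D _ X _]inord_val; have [<-|ia] := eqVneq (val i) a; first exact: D_aa.
by apply: simple_entry0.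
Qed.

End Derivation.
End Derivations.

Section UpperBound.
Variables (K : fieldType) (p : nat).
Local Notation n := p.+1.
Local Notation M := 'M[K]_n.
Local Notation superdiag := (@superdiag K p).
Local Notation emx := (@emx K p).
Hypotheses (p_ge3 : (3 <= p)%N) (two_neq0 : (2 : K) != 0).

Variables (m : nat) (br : 'rV[K]_m -> 'rV[K]_m -> 'rV[K]_m) (N : 'M[K]_m).
Hypotheses (br_lie : is_lie_bracket br) (L_solvable : lie_solvable br)
  (N_nilradical : is_nilradical br N).

Variable phi : M -> 'rV[K]_m.
Hypotheses (phi_lin : tlinear phi)
  (phi_inj : forall A B, superdiag 1 A -> superdiag 1 B -> phi A = phi B -> A = B)
  (phi_N : forall A, superdiag 1 A -> (phi A <= N)%MS)
  (phi_onto : forall v, (v <= N)%MS -> exists2 A, superdiag 1 A & phi A = v)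
  (phi_comm : forall A B, superdiag 1 A -> superdiag 1 B ->
     phi (mx_comm A B) = br (phi A) (phi B)).

Let N_ideal : is_ideal br N. Proof. by case: N_nilradical. Qed.

Definition phi_inv (v : 'rV[K]_m) : M :=
  epsilon (inhabits 0) (fun A => superdiag 1 A /\ phi A = v).

Lemma phi_invP v : (v <= N)%MS -> superdiag 1 (phi_inv v) /\ phi (phi_inv v) = v.
Proof.
move=> vN; apply: (epsilon_spec (inhabits 0) (fun A => superdiag 1 A /\ phi A = v)).
by have [A A1 <-] := phi_onto vN; exists A.
Qed.

Lemma phiK A : superdiag 1 A -> phi_inv (phi A) = A.
Proof. by move=> A1; have [? ?] := phi_invP (phi_N A1); apply: phi_inj. Qed.

Lemma phi_inv_lin c u v : (u <= N)%MS -> (v <= N)%MS ->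
  phi_inv (c *: u + v) = c *: phi_inv u + phi_inv v.
Proof.
move=> uN vN; have [u1 <-] := phi_invP uN; have [v1 <-] := phi_invP vN.
by rewrite -phi_lin // !phiK //; apply: superdiagP.
Qed.

Definition adT (x : 'rV[K]_m) (A : M) : M := phi_inv (br x (phi A)).

Lemma adT_superdiag1 x A : superdiag 1 A -> superdiag 1 (adT x A).
Proof. by move=> A1; apply: (phi_invP _).1; apply/N_ideal/phi_N. Qed.

Lemma phi_adT x A : superdiag 1 A -> phi (adT x A) = br x (phi A).
Proof. by move=> A1; apply: (phi_invP _).2; apply/N_ideal/phi_N. Qed.

Lemma adT_derivation x : is_derivation (adT x).
Proof.
have comm1 A B : superdiag 1 A -> superdiag 1 B -> superdiag 1 (mx_comm A B).
  by move=> A1 B1; apply: (superdiag_comm (k := 1) (l := 0)) => //; apply: superdiagW B1.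
split=> [c A B A1 B1 | | A B A1 B1].
- rewrite /adT phi_lin // (linfunD (br_linr br_lie x)) (linfunZ (br_linr br_lie x)).
  by rewrite phi_inv_lin //; apply/N_ideal/phi_N.
- exact: adT_superdiag1.
- have xA1 := adT_superdiag1 x A1; have xB1 := adT_superdiag1 x B1.
  have xAB1 := comm1 _ _ xA1 B1; have AxB1 := comm1 _ _ A1 xB1.
  apply: phi_inj; [exact/adT_superdiag1/comm1 | exact: superdiagD | ].
  rewrite phi_adT; last exact: comm1.
  rewrite (tlinearD phi_lin xAB1 AxB1) !phi_comm // !phi_adT //.
  by rewrite (br_leibniz br_lie) addrC.
Qed.

Lemma adT_linl c x y A : superdiag 1 A -> adT (c *: x + y) A = c *: adT x A + adT y A.
Proof. by move=> A1; rewrite /adT (br_linl br_lie) phi_inv_lin //; apply/N_ideal/phi_N. Qed.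

Lemma adT_br x y A : superdiag 1 A -> adT (br x y) A = adT x (adT y A) - adT y (adT x A).
Proof.
move=> A1; have xA1 := adT_superdiag1 x A1; have yA1 := adT_superdiag1 y A1.
have xyA1 := adT_superdiag1 x yA1; have yxA1 := adT_superdiag1 y xA1.
apply: phi_inj; [exact: adT_superdiag1 | exact: superdiagB | ].
rewrite (tlinearB phi_lin xyA1 yxA1) !phi_adT //.
by rewrite (br_leibniz br_lie) addrC addKr.
Qed.

Lemma adT_superdiag x k A : (0 < k)%N -> superdiag k A -> superdiag k (adT x A).
Proof.
move=> k_gt0 Ak; have := der_superdiag (adT_derivation x) (s := 1) isT _ k_gt0 Ak.
by rewrite addnK; apply=> a ap; apply/adT_superdiag1/superdiag_emx; lia.
Qed.

(* x acts on the simple root vector E_{a,a+1} with eigenvalue [simple_weights x]_a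
   modulo higher superdiagonals. *)
Definition simple_weights (x : 'rV[K]_m) : 'rV[K]_p :=
  \row_(a < p) adT x (emx a a.+1) (inord a) (inord a.+1).

Lemma simple_weights_lin : linear simple_weights.
Proof.
move=> c x y; apply/rowP => a; rewrite !mxE adT_linl ?mxE //.
by apply: superdiag_emx; have := ltn_ord a; lia.
Qed.

Definition Lraise : 'M[K]_m := kermx (lin1_mx simple_weights).

Lemma Lraise_superdiag v k A :
  (v <= Lraise)%MS -> (0 < k)%N -> superdiag k A -> superdiag k.+1 (adT v A).
Proof.
move=> vL k_gt0 Ak.
have weights0 a : (a < p)%N -> adT v (emx a a.+1) (inord a) (inord a.+1) = 0.
  move=> ap; move: vL; rewrite sub_kermx (mul_rV_linfun simple_weights_lin).
  by move=> /eqP/rowP/(_ (Ordinal ap)); rewrite !mxE.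
have vE2 := der_superdiag2_simple (adT_derivation v) p_ge3 two_neq0 weights0.
by have := der_superdiag (adT_derivation v) (s := 2) isT vE2 k_gt0 Ak; rewrite addn2 subn1.
Qed.

Lemma Lraise_ideal : is_ideal br Lraise.
Proof.
move=> x y yL; rewrite sub_kermx (mul_rV_linfun simple_weights_lin).
apply/eqP/rowP => a; have ap := ltn_ord a.
have Ea1 : superdiag 1 (emx a a.+1) by apply: superdiag_emx; lia.
have xyE2 : superdiag 2 (adT x (adT y (emx a a.+1))).
  by apply: adT_superdiag => //; apply: Lraise_superdiag.
have yxE2 : superdiag 2 (adT y (adT x (emx a a.+1))).
  by apply: Lraise_superdiag => //; apply: adT_superdiag1.
by rewrite !mxE adT_br // mx_entryB xyE2 ?yxE2 ?subr0 // !inordK; lia.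
Qed.

Definition Nfilt k : 'M[K]_m :=
  (\sum_(i : 'I_n) \sum_(j : 'I_n | (k + i <= j)%N) <<phi (delta_mx i j)>>)%MS.

Lemma phi_Nfilt k A : (0 < k)%N -> superdiag k A -> (phi A <= Nfilt k)%MS.
Proof.
move=> k_gt0 Ak; rewrite (superdiag_sum_delta Ak).
have delta1 (i j : 'I_n) : (k + i <= j)%N -> superdiag 1 (delta_mx i j : M).
  by move=> kij; exact: superdiagW k_gt0 (superdiag_delta K kij).
rewrite tlinear_sum // => [|i _]; last by apply: superdiag_sum => j /delta1/superdiagZ.
apply: summx_sub => i _; rewrite tlinear_sum // => [|j /delta1/superdiagZ] //.
apply: summx_sub => j kij; rewrite (tlinearZ phi_lin _ (delta1 _ _ kij)) scalemx_sub //.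
by apply: (sumsmx_sup i) => //; apply: (sumsmx_sup j) => //; rewrite genmxE.
Qed.

Lemma Nfilt_linfun k (f : 'rV[K]_m -> 'rV[K]_m) (C : 'M[K]_m) : linear f ->
  (forall i j : 'I_n, (k + i <= j)%N -> (f (phi (delta_mx i j)) <= C)%MS) ->
  forall w, (w <= Nfilt k)%MS -> (f w <= C)%MS.
Proof.
move=> f_lin fC; apply/(sub_preimmx f_lin).
by apply/sumsmx_subP => i _; apply/sumsmx_subP => j ij; rewrite genmxE preimmxE // fC.
Qed.

Lemma Nfilt_eq0 k (w : 'rV[K]_m) : (n <= k)%N -> (w <= Nfilt k)%MS -> w = 0.
Proof.
move=> nk wk; apply/eqP; rewrite -(submx0 w).
apply: (Nfilt_linfun (f := id)) wk => [a x y // | i j].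
by have := ltn_ord j; lia.
Qed.

Lemma N_Nfilt1 : (N <= Nfilt 1)%MS.
Proof.
by apply/row_subP => i; have [A A1 <-] := phi_onto (row_sub i N); apply: phi_Nfilt.
Qed.

Section RaisingIdeal.
Variable J : 'M[K]_m.
Hypotheses (J_ideal : is_ideal br J) (J_Lraise : (J <= Lraise)%MS)
  (JJ_N : (brk br J J <= N)%MS).

Let G := (J + N)%MS.

Lemma br_Nfilt u k w :
  (u <= G)%MS -> (0 < k)%N -> (w <= Nfilt k)%MS -> (br u w <= Nfilt k.+1)%MS.
Proof.
move=> uG k_gt0 wk; apply: (Nfilt_linfun (br_linr br_lie u) _ wk) => i j le_kij.
have Eij : superdiag k (delta_mx i j : M) by apply: superdiag_delta.
have Eij1 : superdiag 1 (delta_mx i j : M) by apply: superdiagW Eij.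
apply: (sub_preimmx (br_linl br_lie _) _ _).1 uG; rewrite addsmx_sub.
apply/andP; split; apply/(sub_preimmx (br_linl br_lie _)) => v vG.
  rewrite -phi_adT //; apply: phi_Nfilt => //.
  by apply: Lraise_superdiag => //; apply: submx_trans vG J_Lraise.
have [B B1 <-] := phi_onto vG.
by rewrite -phi_comm //; apply: phi_Nfilt => //; rewrite -add1n; apply: superdiag_comm.
Qed.

Lemma brk_Nfilt1 : (brk br G G <= Nfilt 1)%MS.
Proof.
apply: submx_trans N_Nfilt1; apply: brk_sub => u v uG vG.
apply: (sub_preimmx (br_linl br_lie v) _ _).1 uG; rewrite addsmx_sub.
apply/andP; split; apply/(sub_preimmx (br_linl br_lie v)) => u' u'G; last first.
  by rewrite (br_anticomm br_lie) eqmx_opp N_ideal.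
apply: (sub_preimmx (br_linr br_lie u') _ _).1 vG; rewrite addsmx_sub.
apply/andP; split; apply/(sub_preimmx (br_linr br_lie u')) => v' v'G; last exact: N_ideal.
by apply: submx_trans JJ_N; apply: brk_in.
Qed.

Lemma lower_central_Nfilt k : (lower_central br G k.+1 <= Nfilt k.+1)%MS.
Proof.
elim: k => [|k IHk]; first exact: brk_Nfilt1.
by apply: brk_sub => u w uG wC; apply: br_Nfilt => //; apply: submx_trans IHk.
Qed.

Lemma ideal_Lraise_sub_N : (J <= N)%MS.
Proof.
have G_nil : sub_nilpotent br G.
  exists n; apply/eqP; rewrite mxrank_eq0; apply/eqP/row_matrixP => i.
  by rewrite row0; apply: (@Nfilt_eq0 n) => //; apply: submx_trans (row_sub i _) _;
    exact: lower_central_Nfilt.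
case: N_nilradical => _ _ N_max; apply: submx_trans (addsmxSl J N) _.
exact: N_max (ideal_adds br_lie J_ideal N_ideal) G_nil (addsmxSr J N).
Qed.

End RaisingIdeal.

Lemma Lraise_sub_N : (Lraise <= N)%MS.
Proof.
have [j0 /eqP] := L_solvable; rewrite mxrank_eq0 => /eqP derived0.
have derived_N j : (derived br Lraise j.+1 <= N)%MS -> (derived br Lraise j <= N)%MS.
  apply: ideal_Lraise_sub_N; first exact: ideal_derived Lraise_ideal.
  exact: derived_sub Lraise_ideal.
suff derived_N' d : (d <= j0)%N -> (derived br Lraise (j0 - d) <= N)%MS.
  by have := derived_N' j0 (leqnn _); rewrite subnn.
elim: d => [_ | d IHd le_dj0].
  rewrite subn0; apply: submx_trans (derivedS br_lie _ (submx1 Lraise)) _.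
  by rewrite derived0 sub0mx.
by apply: derived_N; rewrite -subSn // subSS; apply: IHd; lia.
Qed.

Lemma rank_Nfilt1 : (\rank (Nfilt 1) <= 'C(n, 2))%N.
Proof.
apply: leq_trans (mxrank_sum_leqif _).1 _ => /=.
have := sum_superdiag_pairs n 1; rewrite subn1 /= => <-.
apply: leq_sum => i _; rewrite big_mkcond /=; apply: leq_sum => j _.
by case: ifP => // _; rewrite mxrank_gen rank_leq_row.
Qed.

Lemma codim_nilradical_le : (m - 'C(n, 2) <= p)%N.
Proof.
have rank_L := mxrankS Lraise_sub_N; have rank_N := mxrankS N_Nfilt1.
have := mxrank_ker (lin1_mx simple_weights); have := rank_leq_col (lin1_mx simple_weights).
rewrite -/Lraise; have := rank_Nfilt1; lia.
Qed.

End UpperBound.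

Section CoordSpan.
Variables (K : fieldType) (m : nat).

Definition coord_span (P : pred 'I_m) : 'M[K]_m := diag_mx (\row_k (P k)%:R).

Lemma sub_coord_spanP (P : pred 'I_m) (v : 'rV[K]_m) :
  (v <= coord_span P)%MS <-> (forall k, ~~ P k -> v 0 k = 0).
Proof.
have vP (w : 'rV[K]_m) k : (w *m coord_span P) 0 k = if P k then w 0 k else 0.
  by rewrite mul_mx_diag !mxE; case: (P k); rewrite ?mulr1 ?mulr0.
split=> [/submxP[w ->] k /negbTE Pk | vP0]; first by rewrite vP Pk.
apply/submxP; exists v; apply/rowP => k; rewrite vP.
by case: ifP => // /negbT /vP0.
Qed.

End CoordSpan.

(* The extremal algebra: upper triangular matrices whose last diagonal entry
   vanishes, in coordinates indexed by the admissible positions tri_idx. *)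
Section Example.
Variables (K : fieldType) (p : nat).
Hypothesis p_gt0 : (0 < p)%N.
Local Notation n := p.+1.
Local Notation M := 'M[K]_n.
Local Notation superdiag := (@superdiag K p).
Local Notation emx := (@emx K p).

Definition tri_idx : {set 'I_n * 'I_n} :=
  [set q : 'I_n * 'I_n | (q.1 <= q.2)%N && (q.1 < p)%N].

Lemma tri_idx0 : (ord0, ord0) \in tri_idx.
Proof. by rewrite inE /= p_gt0. Qed.

Local Notation m := #|tri_idx|.

Definition tri_pos (k : 'I_m) : 'I_n * 'I_n := enum_val k.
Definition tri_rank (q : 'I_n * 'I_n) : 'I_m := enum_rank_in tri_idx0 q.

Lemma tri_pos_idx k : tri_pos k \in tri_idx. Proof. exact: enum_valP. Qed.
Lemma tri_rankK q : q \in tri_idx -> tri_pos (tri_rank q) = q.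
Proof. exact: enum_rankK_in. Qed.
Lemma tri_posK k : tri_rank (tri_pos k) = k. Proof. exact: enum_valK_in. Qed.

Definition tri_mx (x : 'rV[K]_m) : M :=
  \matrix_(i, j) if (i, j) \in tri_idx then x 0 (tri_rank (i, j)) else 0.

Definition tri_rv (A : M) : 'rV[K]_m := \row_k A (tri_pos k).1 (tri_pos k).2.

Definition tri_supp (A : M) := forall i j, (i, j) \notin tri_idx -> A i j = 0.

Lemma tri_mxK x : tri_rv (tri_mx x) = x.
Proof. by apply/rowP => k; rewrite !mxE -surjective_pairing tri_pos_idx tri_posK. Qed.

Lemma tri_mx_supp x : tri_supp (tri_mx x).
Proof. by move=> i j /negbTE ij; rewrite mxE ij. Qed.

Lemma tri_rvK A : tri_supp A -> tri_mx (tri_rv A) = A.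
Proof.
move=> A_supp; apply/matrixP => i j; rewrite mxE.
by case: ifP => ij; [rewrite mxE tri_rankK | rewrite A_supp ?ij].
Qed.

Lemma tri_rv_lin : linear tri_rv.
Proof. by move=> c A B; apply/rowP => k; rewrite !mxE. Qed.

Lemma tri_mx_lin : linear tri_mx.
Proof.
by move=> c x y; apply/matrixP => i j; rewrite !mxE; case: ifP; rewrite ?mulr0 ?addr0.
Qed.

Lemma tri_supp_superdiag0 A : tri_supp A -> superdiag 0 A.
Proof. by move=> A_supp i j ji; apply: A_supp; rewrite inE /=; lia. Qed.

Lemma strict_upper_tri_supp A : superdiag 1 A -> tri_supp A.
Proof.
move=> A1 i j; rewrite inE /= negb_and -!ltnNge => ij.
by apply: A1; have := ltn_ord j; lia.
Qed.

Lemma tri_supp_comm A B : tri_supp A -> tri_supp B -> tri_supp (mx_comm A B).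
Proof.
move=> A_supp B_supp i j; rewrite inE /= negb_and -!ltnNge => ij.
have A0 := tri_supp_superdiag0 A_supp; have B0 := tri_supp_superdiag0 B_supp.
have [lt_ji | le_ij] := ltnP j i; first exact: (superdiag_comm A0 B0).
have -> : i = j by apply: ord_inj; have := ltn_ord j; lia.
exact: mx_comm_diag_entry.
Qed.

Definition tri_br (x y : 'rV[K]_m) : 'rV[K]_m := tri_rv (mx_comm (tri_mx x) (tri_mx y)).

Lemma tri_mx_br x y : tri_mx (tri_br x y) = mx_comm (tri_mx x) (tri_mx y).
Proof. by rewrite tri_rvK //; apply: tri_supp_comm; apply: tri_mx_supp. Qed.

Lemma tri_br_lie : is_lie_bracket tri_br.
Proof.
split=> [c x y z | c x y z | x | x y z].
- by rewrite /tri_br (linfunD tri_mx_lin) (linfunZ tri_mx_lin) mx_comm_linl tri_rv_lin.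
- by rewrite /tri_br (linfunD tri_mx_lin) (linfunZ tri_mx_lin) mx_comm_linr tri_rv_lin.
- by rewrite /tri_br /mx_comm subrr (linfun0 tri_rv_lin).
- by rewrite /tri_br !tri_mx_br -!(linfunD tri_rv_lin) mx_comm_jacobi (linfun0 tri_rv_lin).
Qed.

Definition tri_filt k : 'M[K]_m :=
  coord_span K (fun l => (k + (tri_pos l).1 <= (tri_pos l).2)%N).

Lemma tri_filtP k (v : 'rV[K]_m) : (v <= tri_filt k)%MS <-> superdiag k (tri_mx v).
Proof.
rewrite sub_coord_spanP; split=> [vk i j ji | vk l].
  by rewrite mxE; case: ifP => // ij; apply: vk; rewrite tri_rankK //= -ltnNge.
rewrite -ltnNge => lk; have := vk (tri_pos l).1 (tri_pos l).2 lk.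
by rewrite mxE -surjective_pairing tri_pos_idx tri_posK.
Qed.

Lemma tri_filtW k l (v : 'rV[K]_m) :
  (k <= l)%N -> (v <= tri_filt l)%MS -> (v <= tri_filt k)%MS.
Proof. by move=> kl /tri_filtP vl; apply/tri_filtP; apply: superdiagW vl. Qed.

Lemma tri_br_filt k l (u v : 'rV[K]_m) : (u <= tri_filt k)%MS -> (v <= tri_filt l)%MS ->
  (tri_br u v <= tri_filt (k + l))%MS.
Proof.
move=> /tri_filtP uk /tri_filtP vl.
by apply/tri_filtP; rewrite tri_mx_br; apply: superdiag_comm.
Qed.

Lemma tri_br_filt1 (u v : 'rV[K]_m) : (tri_br u v <= tri_filt 1)%MS.
Proof.
apply/tri_filtP; rewrite tri_mx_br => i j ji.
have [lt_ji | le_ij] := ltnP j i.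
  by apply: (superdiag_comm (k := 0) (l := 0)) => //; apply/tri_supp_superdiag0/tri_mx_supp.
have -> : i = j by apply: ord_inj; lia.
by apply: mx_comm_diag_entry; apply/tri_supp_superdiag0/tri_mx_supp.
Qed.

Lemma tri_filt_eq0 k (v : 'rV[K]_m) : (n <= k)%N -> (v <= tri_filt k)%MS -> v = 0.
Proof.
move=> nk /tri_filtP vk; rewrite -(tri_mxK v) (_ : tri_mx v = 0) ?(linfun0 tri_rv_lin) //.
by apply/matrixP => i j; rewrite vk ?mxE //; have := ltn_ord j; lia.
Qed.

Lemma tri_filt_rank0 k (A : 'M[K]_m) : (n <= k)%N -> (A <= tri_filt k)%MS -> \rank A = 0%N.
Proof.
move=> nk Ak; apply/eqP; rewrite mxrank_eq0; apply/eqP/row_matrixP => r.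
by rewrite row0; apply: (tri_filt_eq0 nk); apply: submx_trans (row_sub r A) Ak.
Qed.

Lemma tri_solvable : lie_solvable tri_br.
Proof.
suff der_filt j : (derived tri_br 1%:M j.+1 <= tri_filt j.+1)%MS.
  by exists n; apply: (tri_filt_rank0 (leqnn _)).
elim: j => [|j IHj]; first by apply: brk_sub => u v _ _; exact: tri_br_filt1.
apply: brk_sub => u v uj vj; apply: (tri_filtW (l := j.+1 + j.+1)); first lia.
by apply: tri_br_filt; apply: submx_trans IHj.
Qed.

Lemma tri_filt1_ideal : is_ideal tri_br (tri_filt 1).
Proof. by move=> x y _; exact: tri_br_filt1. Qed.

Lemma tri_filt1_nilpotent : sub_nilpotent tri_br (tri_filt 1).
Proof.
suff lc_filt j : (lower_central tri_br (tri_filt 1) j <= tri_filt j.+1)%MS.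
  by exists p; apply: (tri_filt_rank0 (leqnn _)).
elim: j => [|j IHj] //=; apply: brk_sub => u v u1 vj.
by apply: (tri_br_filt u1); apply: submx_trans IHj.
Qed.

Lemma tri_filt1_iso : iso_to_T n tri_br (tri_filt 1).
Proof.
have supp A : strict_upper A -> tri_supp A by move=> A1; apply: strict_upper_tri_supp.
exists tri_rv; split=> [a A B _ _ | A B A1 B1 AB | A A1 | v /tri_filtP v1 | A B A1 B1].
- exact: tri_rv_lin.
- by rewrite -(tri_rvK (supp _ A1)) AB (tri_rvK (supp _ B1)).
- by apply/tri_filtP; rewrite (tri_rvK (supp _ A1)).
- by exists (tri_mx v); [exact: v1 | exact: tri_mxK].
- by rewrite /tri_br (tri_rvK (supp _ A1)) (tri_rvK (supp _ B1)).
Qed.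

Lemma tri_filt1_diag v :
  (forall i, (i < p)%N -> tri_mx v (inord i) (inord i) = tri_mx v (inord i.+1) (inord i.+1)) ->
  (v <= tri_filt 1)%MS.
Proof.
move=> diag_eq; have V0 := tri_supp_superdiag0 (tri_mx_supp v).
have diag0 t : (t <= p)%N -> tri_mx v (inord (p - t)) (inord (p - t)) = 0.
  elim: t => [_ | t IHt tp].
    by rewrite subn0 tri_mx_supp // inE /= inordK // ltnn andbF.
  rewrite diag_eq; last lia.
  by rewrite (_ : (p - t.+1).+1 = p - t)%N; [apply: IHt | ]; lia.
apply/tri_filtP => i j ji; have [lt_ji | le_ij] := ltnP j i; first exact: V0.
have -> : j = i by apply: ord_inj; lia.
have ip : (i <= p)%N by rewrite -ltnS.
by have := diag0 (p - i)%N (leq_subr _ _); rewrite subKn // inord_val.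
Qed.

Section IteratedBracket.
Variables (v : 'rV[K]_m) (i : nat).
Hypothesis ip : (i < p)%N.
Let e := tri_rv (emx i i.+1).

Let e_supp : tri_supp (emx i i.+1).
Proof. by apply: strict_upper_tri_supp; apply: superdiag_emx; lia. Qed.

Lemma emx_tri_filt1 : (e <= tri_filt 1)%MS.
Proof. by apply/tri_filtP; rewrite tri_rvK //; apply: superdiag_emx; lia. Qed.

Lemma tri_iter_br_entry k :
  tri_mx (iter k (tri_br v) e) (inord i) (inord i.+1)
  = (tri_mx v (inord i) (inord i) - tri_mx v (inord i.+1) (inord i.+1)) ^+ k.
Proof.
elim: k => [|k IHk] /=; first by rewrite (tri_rvK e_supp) mxE !eqxx expr0.
have iter1 : superdiag 1 (tri_mx (iter k (tri_br v) e)).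
  by apply/tri_filtP; case: k {IHk} => [|k]; [exact: emx_tri_filt1 | exact: tri_br_filt1].
rewrite tri_mx_br mx_comm_superdiag1_entry // ?IHk ?exprS //.
exact/tri_supp_superdiag0/tri_mx_supp.
Qed.

End IteratedBracket.

Lemma tri_filt1_max (J : 'M[K]_m) :
  sub_nilpotent tri_br J -> (tri_filt 1 <= J)%MS -> (J <= tri_filt 1)%MS.
Proof.
move=> [k0 /eqP]; rewrite mxrank_eq0 => /eqP lc0 N_J; apply/row_subP => r.
have vJ := row_sub r J; apply: tri_filt1_diag => i ip; apply/eqP.
rewrite -subr_eq0; apply/negPn/negP => c_neq0.
have lc k : (iter k (tri_br (row r J)) (tri_rv (emx i i.+1)) <= lower_central tri_br J k)%MS.
  elim: k => [|k IHk] /=; first exact: submx_trans (emx_tri_filt1 ip) N_J.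
  exact: (brk_in tri_br_lie vJ IHk : (_ <= brk tri_br J _)%MS).
have iter0 : iter k0 (tri_br (row r J)) (tri_rv (emx i i.+1)) = 0.
  by apply/eqP; rewrite -submx0 -lc0 lc.
have := tri_iter_br_entry (row r J) ip k0; rewrite iter0 (linfun0 tri_mx_lin) mxE.
by move/esym/eqP; rewrite expf_eq0 (negbTE c_neq0) andbF.
Qed.

Lemma card_tri_idx : m = ('C(n, 2) + p)%N.
Proof.
pose U := [set q : 'I_n * 'I_n | (q.1 <= q.2)%N].
have top : (ord_max, ord_max) \in U by rewrite inE.
have -> : tri_idx = U :\ (ord_max, ord_max).
  apply/setP => -[i j]; rewrite !inE xpair_eqE -!(inj_eq (@ord_inj _)) /=.
  by move: (ltn_ord i) (ltn_ord j) => ? ?; apply/idP/idP; lia.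
have cardU : #|U| = 'C(n.+1, 2).
  rewrite -(sum_superdiag_pairs n 0) pair_big /= -sum1_card big_mkcond /=.
  by apply: eq_bigr => -[i j] _; rewrite inE; case: leqP.
by move: (cardsD1 (ord_max, ord_max) U); rewrite top cardU binS bin1 add1n addnS => -[<-].
Qed.

End Example.

Lemma bin2_half n : 'C(n, 2) = (n * (n - 1) %/ 2)%N.
Proof. by rewrite bin2 subn1 divn2. Qed.

Lemma max_f_statement_char_neq2 (K : fieldType) n :
  (4 <= n)%N -> (2 : K) != 0 -> max_f_statement K n.
Proof.
case: n => [//|p] n_ge4 two_neq0; have p_gt0 : (0 < p)%N by lia.
rewrite /max_f_statement -bin2_half subn1 /=; split.
  move=> m br N br_lie L_solvable N_nilradical [phi [phi_lin phi_inj phi_N phi_onto phi_comm]].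
  have p_ge3 : (3 <= p)%N by lia.
  exact (codim_nilradical_le p_ge3 two_neq0 br_lie L_solvable N_nilradical
           phi_lin phi_inj phi_N phi_onto phi_comm).
exists #|tri_idx p|, (@tri_br K p p_gt0), (@tri_filt K p 1); split.
- exact: tri_br_lie.
- exact: tri_solvable.
- split=> [| | J _]; [exact: tri_filt1_ideal | exact: tri_filt1_nilpotent | exact: tri_filt1_max].
- exact: tri_filt1_iso.
- by rewrite card_tri_idx // addnC addnK.
Qed.

Theorem lemma2 (R : realType) (n : nat) :
  (4 <= n)%N -> max_f_statement R n /\ max_f_statement (R[i])%C n.
Proof. by move=> n_ge4; split; apply: max_f_statement_char_neq2; rewrite // pnatr_eq0. Qed.
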